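(* There is an absolute constant $c>0$ such that, for every $n\ge 2$, there exists an $n\times n$ $(0,1)$-matrix $A$ with the following property. Every depth-$2$ circuit computing $f_A(\vec x)=A\vec x$ over $GF(2)$ in which every middle node computes a linear boolean function has at least $c\,n^2/\log n$ wires. The output nodes of such a circuit may compute arbitrary boolean functions.
   Context: A depth-$2$ circuit has $n$ input nodes $x_1,\dots,x_n$, a set of middle nodes, and $n$ output nodes $y_1,\dots,y_n$. Wires go only from inputs to middle nodes, from middle nodes to outputs, or from inputs directly to outputs. Each non-input node may compute an arbitrary boolean function of the values at its in-neighbours, with no restriction on fanin or fanout. The circuit computes $f=(f_1,\dots,f_n)$ if the function at $y_i$ equals $f_i$ for all $i$. A boolean function is linear if it is the sum modulo $2$ of some subset of its arguments (the empty sum is allowed) or the negation of such a sum. The number of wires is the number of edges of the circuit. *)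

From HB Require Import structures.
From mathcomp Require Import all_boot.
Set Implicit Arguments. Unset Strict Implicit. Unset Printing Implicit Defensive.

(* Each node's function is given on the full vector but it is only ever
   applied to the vector of values of its in-neighbours (others masked to
   false), so it is an arbitrary function of its in-neighbours' values. *)
Record circuit (n : nat) := Circuit {
  mid : nat;
  w_im : 'I_n -> 'I_mid -> bool;
  w_mo : 'I_mid -> 'I_n -> bool;
  w_io : 'I_n -> 'I_n -> bool;
  g_mid : 'I_mid -> {ffun 'I_n -> bool} -> bool;
  g_out : 'I_n -> {ffun 'I_mid -> bool} -> {ffun 'I_n -> bool} -> bool
}.

Definition mask (T : finType) (keep : T -> bool) (v : {ffun T -> bool})
  : {ffun T -> bool} := [ffun t => keep t && v t].

Definition mid_val n (C : circuit n) (x : {ffun 'I_n -> bool}) (j : 'I_(mid C))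
  : bool := @g_mid n C j (mask (fun i => @w_im n C i j) x).

Definition mid_vals n (C : circuit n) (x : {ffun 'I_n -> bool})
  : {ffun 'I_(mid C) -> bool} := [ffun j => @mid_val n C x j].

Definition out_val n (C : circuit n) (x : {ffun 'I_n -> bool}) (k : 'I_n)
  : bool :=
  @g_out n C k (mask (fun j => @w_mo n C j k) (@mid_vals n C x))
          (mask (fun i => @w_io n C i k) x).

Definition xsum (T : finType) (S : {set T}) (v : {ffun T -> bool}) : bool :=
  \big[addb/false]_(t in S) v t.

Definition linear_middle n (C : circuit n) : Prop :=
  forall j : 'I_(mid C), exists (S : {set 'I_n}) (b : bool),
    (forall i, i \in S -> @w_im n C i j) /\
    (forall x : {ffun 'I_n -> bool},
        @g_mid n C j (mask (fun i => @w_im n C i j) x) = b (+) xsum S (mask (fun i => @w_im n C i j) x)).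

Definition fA n (A : 'I_n -> 'I_n -> bool) (x : {ffun 'I_n -> bool}) (k : 'I_n)
  : bool := \big[addb/false]_(j < n) (A k j && x j).

Definition computes n (C : circuit n) (A : 'I_n -> 'I_n -> bool) : Prop :=
  forall (x : {ffun 'I_n -> bool}) (k : 'I_n), out_val C x k = fA A x k.

Definition wires n (C : circuit n) : nat :=
  #|[set p : 'I_n * 'I_(mid C) | @w_im n C p.1 p.2]|
  + #|[set p : 'I_(mid C) * 'I_n | @w_mo n C p.1 p.2]|
  + #|[set p : 'I_n * 'I_n | @w_io n C p.1 p.2]|.

(* If middle node j computes the affine function x |-> c_j + <v_j, x>, then output k can
   only distinguish inputs through the forms v_j of its middle in-neighbours and the
   coordinates of its direct in-neighbours.  Since y_k = <a_k, x> must be computed, a_k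
   lies in the GF(2)-span of these forms, so A is a GF(2)-sum of all-ones rectangles
   (rows fed by j) x (support of v_j), plus single entries for direct wires, whose side
   lengths add up to at most 3 times the number of wires w.  Such a sum is described by
   a word of length 3w over an alphabet of 2n + 1 letters; as long as
   (2n + 1)^(3w) < 2^(n^2) some matrix has no such description, which forces
   w >= c n^2 / log n. *)

From HB Require Import structures.
From mathcomp Require Import all_boot all_algebra zify.
Set Implicit Arguments. Unset Strict Implicit. Unset Printing Implicit Defensive.
Import GRing.Theory.

Lemma exists_not_in_image (T M : finType) (f : T -> M) :
  #|T| < #|M| -> exists m, forall t, f t != m.
Proof.
move=> ltTM; have /subsetPn[m _ notf] : ~~ ([set: M] \subset f @: T).
  apply: contraTN ltTM => /subset_leq_card; rewrite cardsT -leqNgt => leMf.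
  exact: leq_trans leMf (leq_imset_card _ _).
by exists m => t; apply: contraNneq notf => <-; apply: imset_f.
Qed.

Lemma card_pairs (I J : finType) (R : I -> J -> bool) :
  #|[set p : I * J | R p.1 p.2]| = \sum_i #|[pred j | R i j]|.
Proof.
under eq_bigr do rewrite -sum1_card.
by rewrite pair_big_dep sum1dep_card.
Qed.

Lemma card_pairs_swap (I J : finType) (R : I -> J -> bool) :
  #|[set p : I * J | R p.1 p.2]| = \sum_j #|[pred i | R i j]|.
Proof.
rewrite card_pairs; under eq_bigr do rewrite -sum1_card.
rewrite (exchange_big_dep xpredT) //=; apply: eq_bigr => j _; by rewrite sum1_card.
Qed.

Lemma big_xor_eq1 (T : finType) (P : pred T) (a : T) :
  \big[addb/false]_t (P t && (t == a)) = P a.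
Proof.
rewrite (bigD1 a) //= eqxx andbT big1 ?addbF // => t /negbTE ->.
by rewrite andbF.
Qed.

Section RectangleCode.
Variable n : nat.

(* A block [(cols, rows)] stands for the all-ones rectangle [rows x cols]. *)
Definition block := (seq 'I_n * seq 'I_n)%type.

Definition in_block (b : block) (k i : 'I_n) := (k \in b.2) && (i \in b.1).

Definition rect_sum (l : seq block) (k i : 'I_n) :=
  \big[addb/false]_(b <- l) in_block b k i.

Lemma rect_sum_cat l1 l2 k i :
  rect_sum (l1 ++ l2) k i = rect_sum l1 k i (+) rect_sum l2 k i.
Proof. by rewrite /rect_sum big_cat. Qed.

Lemma rect_sum_filter_nonempty l k i :
  rect_sum [seq b <- l | b.2 != [::]] k i = rect_sum l k i.
Proof.
rewrite /rect_sum big_filter big_mkcond /=; apply: eq_bigr => b _.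
by case: ifP => // /negbFE /eqP; rewrite /in_block => ->.
Qed.

Local Notation token := (option (bool * 'I_n)).

(* [Some (true, i)] adds column [i] and [Some (false, k)] adds row [k] to the
   current block; [None] closes it. *)
Definition encode_block (b : block) : seq token :=
  [seq Some (true, i) | i <- b.1] ++ [seq Some (false, k) | k <- b.2] ++ [:: None].

Definition encode (l : seq block) : seq token := flatten (map encode_block l).

Fixpoint parse (s : seq token) : seq block :=
  match s with
  | [::] => [::]
  | None :: s' => ([::], [::]) :: parse s'
  | Some (c, x) :: s' =>
      let: (cols, rows) := head ([::], [::]) (parse s') in
      (if c then (x :: cols, rows) else (cols, x :: rows)) :: behead (parse s')
  end.

Lemma parse_encode_block b s : parse (encode_block b ++ s) = b :: parse s.
Proof.
case: b => cols rows; rewrite /encode_block -!catA /=.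
elim: cols => [|i cols IH]; last by rewrite /= IH.
by elim: rows => // k rows IH; rewrite /= IH.
Qed.

Lemma parse_encode l s : parse (encode l ++ s) = l ++ parse s.
Proof. by elim: l => //= b l IH; rewrite -catA parse_encode_block IH. Qed.

Lemma parse_nseq_None p : parse (nseq p None) = nseq p ([::], [::]).
Proof. by elim: p => //= p ->. Qed.

Lemma rect_sum_nseq_empty p k i : rect_sum (nseq p ([::], [::])) k i = false.
Proof. by elim: p => [|p IH]; rewrite /rect_sum ?big_nil // big_cons. Qed.

Lemma size_encode l : size (encode l) = \sum_(b <- l) (size b.1 + size b.2).+1.
Proof.
elim: l => [|b l IH]; rewrite ?big_nil // big_cons /= size_cat IH.
by rewrite /encode_block !size_cat !size_map addnA addn1.
Qed.

Lemma size_encode_cat l1 l2 :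
  size (encode (l1 ++ l2)) = size (encode l1) + size (encode l2).
Proof. by rewrite /encode map_cat flatten_cat size_cat. Qed.

Lemma size_encode_nonempty l : all (fun b : block => b.2 != [::]) l ->
  size (encode l) <= \sum_(b <- l) (size b.1 + 2 * size b.2).
Proof.
move=> /allP ne; rewrite size_encode !big_seq; apply: leq_sum => b /ne.
by case: b.2 => //= k rows _; lia.
Qed.

Lemma exists_matrix_without_short_code L : (2 * n).+1 ^ L < 2 ^ (n * n) ->
  exists A : 'I_n -> 'I_n -> bool, forall l,
    (forall k i, rect_sum l k i = A k i) -> L < size (encode l).
Proof.
move=> few_codes.
pose decode (t : L.-tuple token) : {ffun 'I_n * 'I_n -> bool} :=
  [ffun p => rect_sum (parse t) p.1 p.2].
have [M notM] : exists M, forall t, decode t != M.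
  apply: exists_not_in_image.
  by rewrite card_tuple card_ffun card_option !card_prod !card_bool !card_ord.
exists (fun k i => M (k, i)) => l lA; rewrite ltnNge; apply/negP => short.
have padded : size (encode l ++ nseq (L - size (encode l)) None) == L.
  by rewrite size_cat size_nseq subnKC.
move/eqP: (notM (Tuple padded)); apply; apply/ffunP => -[k i].
by rewrite ffunE /= parse_encode parse_nseq_None rect_sum_cat rect_sum_nseq_empty addbF lA.
Qed.

End RectangleCode.

Section LinearAlgebra.
Local Open Scope ring_scope.

Lemma submx_of_orthogonal (F : fieldType) m n (a : 'rV[F]_n) (V : 'M[F]_(m, n)) :
  (forall x : 'cV_n, V *m x = 0 -> a *m x = 0) -> (a <= V)%MS.
Proof.
move=> orth; rewrite submxE; apply/eqP/matrixP => i c.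
have := orth (col c (cokermx V)); rewrite !colE mulmxA mulmx_coker mul0mx.
by move=> /(_ erefl) /matrixP /(_ i 0); rewrite mulmxA -colE !mxE.
Qed.

Definition b2F (b : bool) : 'F_2 := b%:R.

Lemma b2F_addb a b : b2F (a (+) b) = b2F a + b2F b.
Proof. by case: a; case: b => //; apply/val_inj. Qed.

Lemma b2F_andb a b : b2F (a && b) = b2F a * b2F b.
Proof. by case: a; rewrite /b2F ?mul1r ?mul0r. Qed.

Lemma b2F_eq0 b : (b2F b == 0) = ~~ b.
Proof. by case: b. Qed.

Lemma b2F_inj : injective b2F.
Proof. by case; case => // /eqP; rewrite ?b2F_eq0 // eq_sym b2F_eq0. Qed.

Lemma b2F_neq0 (y : 'F_2) : b2F (y != 0) = y.
Proof. by apply/val_inj; case: y => -[|[|m]] //. Qed.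

Lemma b2F_dot (I : finType) (f g : I -> bool) :
  \sum_i b2F (f i) * b2F (g i) = b2F (\big[addb/false]_i (f i && g i)).
Proof.
rewrite (big_morph b2F b2F_addb (erefl (b2F false))).
by apply: eq_bigr => i _; rewrite b2F_andb.
Qed.

End LinearAlgebra.

Section LinearMiddleCircuit.
Variables (n : nat) (C : circuit n).

Lemma out_val_local x y k :
  (forall j : 'I_(mid C), w_mo j k -> mid_val x j = mid_val y j) ->
  (forall i, w_io C i k -> x i = y i) -> out_val C x k = out_val C y k.
Proof.
move=> Emid Ein; rewrite /out_val; congr (g_out _ _ _); apply/ffunP => t.
  by rewrite !ffunE; case Wt: (w_mo t k) => //=; rewrite Emid.
by rewrite !ffunE; case Wt: (w_io C t k) => //=; rewrite Ein.
Qed.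

Hypothesis C_linear : linear_middle C.

Definition zero_input : {ffun 'I_n -> bool} := [ffun => false].
Definition unit_input (i : 'I_n) : {ffun 'I_n -> bool} := [ffun t => t == i].
Definition mid_coef (j : 'I_(mid C)) (i : 'I_n) :=
  mid_val (unit_input i) j (+) mid_val zero_input j.

Lemma mid_val_affine (j : 'I_(mid C)) :
  exists2 S : {set 'I_n}, (forall i, i \in S -> w_im i j) &
  forall x, mid_val x j = mid_val zero_input j (+) xsum S x.
Proof.
have [S [b [SW g_lin]]] := C_linear j.
have E x : mid_val x j = b (+) xsum S x.
  rewrite /mid_val g_lin /xsum; congr (_ (+) _).
  by apply: eq_bigr => t tS; rewrite ffunE SW.
have zero0 : xsum S zero_input = false by rewrite /xsum big1 // => t _; rewrite ffunE.
by exists S => // x; rewrite !E zero0 addbF.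
Qed.

Lemma mid_coef_mem (j : 'I_(mid C)) S :
  (forall x, mid_val x j = mid_val zero_input j (+) xsum S x) ->
  forall i, mid_coef j i = (i \in S).
Proof.
move=> E i; rewrite /mid_coef E addbC addbA addbb /= /xsum big_mkcond /=.
by under eq_bigr do rewrite ffunE; rewrite (big_xor_eq1 (mem S)).
Qed.

Lemma mid_valE (j : 'I_(mid C)) x :
  mid_val x j = mid_val zero_input j (+) \big[addb/false]_i (mid_coef j i && x i).
Proof.
have [S _ E] := mid_val_affine j; rewrite E /xsum big_mkcond /=.
by congr (_ (+) _); apply: eq_bigr => i _; rewrite (mid_coef_mem E).
Qed.

Lemma mid_coef_wired j i : mid_coef j i -> w_im i j.
Proof. by have [S SW E] := mid_val_affine j; rewrite (mid_coef_mem E); apply: SW. Qed.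

Variable A : 'I_n -> 'I_n -> bool.
Hypothesis C_computes : computes C A.

Local Open Scope ring_scope.

Definition row_of_A k : 'rV['F_2]_n := \row_i b2F (A k i).

(* Rows of [visible k] are the linear forms whose values output [k] can see:
   the coefficient vectors of its middle in-neighbours and the unit vectors of
   its direct in-neighbours; rows of unwired nodes are zero. *)
Definition visible k : 'M['F_2]_(mid C + n, n) :=
  col_mx (\matrix_(j, i) b2F (w_mo j k && mid_coef j i))
         (\matrix_(i', i) b2F (w_io C i' k && (i' == i))).

Lemma row_of_A_sub_visible k : (row_of_A k <= visible k)%MS.
Proof.
apply: submx_of_orthogonal => x.
rewrite mul_col_mx => /eqP; rewrite col_mx_eq0.
move=> /andP[/eqP/matrixP mid0 /eqP/matrixP in0].
pose xb := [ffun i => x i 0 != 0].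
have xE i : x i 0 = b2F (xb i) by rewrite ffunE b2F_neq0.
have Emid (j : 'I_(mid C)) : w_mo j k -> mid_val xb j = mid_val zero_input j.
  move=> Wjk; rewrite mid_valE -[RHS]addbF; congr (_ (+) _).
  apply/negbTE; rewrite -b2F_eq0 -b2F_dot.
  have := mid0 j 0; rewrite !mxE => dot0; apply/eqP; rewrite -[RHS]dot0.
  by apply: eq_bigr => i _; rewrite mxE Wjk xE.
have Ein i : w_io C i k -> xb i = zero_input i.
  move=> Wik; rewrite !ffunE; apply/negbTE/negPn/eqP.
  have := in0 i 0; rewrite !mxE => dot0; rewrite -[RHS]dot0 (bigD1 i) //= big1.
    by rewrite mxE Wik eqxx mul1r addr0.
  by move=> t /negbTE ti; rewrite mxE eq_sym ti andbF mul0r.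
have := out_val_local Emid Ein; rewrite !C_computes => fA_eq.
apply/matrixP => r c; rewrite !ord1 !mxE.
have -> : \sum_i row_of_A k 0 i * x i 0 = b2F (fA A xb k).
  by rewrite -b2F_dot; apply: eq_bigr => i _; rewrite mxE xE.
by rewrite fA_eq /fA big1 // => t _; rewrite ffunE andbF.
Qed.

Definition coef k := row_of_A k *m pinvmx (visible k).
Definition via_mid k (j : 'I_(mid C)) := (lsubmx (coef k) 0 j != 0) && w_mo j k.
Definition direct k i := (rsubmx (coef k) 0 i != 0) && w_io C i k.

Lemma A_decomposition k i :
  A k i = \big[addb/false]_j (via_mid k j && mid_coef j i) (+) direct k i.
Proof.
apply: b2F_inj.
have /matrixP/(_ 0 i) := mulmxKpV (row_of_A_sub_visible k).
rewrite -/(coef k) -[coef k]hsubmxK mul_row_col !mxE => <-.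
rewrite b2F_addb -b2F_dot -[X in b2F X](big_xor_eq1 (direct k) i) -b2F_dot.
by congr (_ + _); apply: eq_bigr => t _; rewrite !mxE !b2F_andb mulrA b2F_neq0 !mxE.
Qed.

Local Close Scope ring_scope.

Definition mid_block j : block n :=
  (enum [pred i | mid_coef j i], enum [pred k | via_mid k j]).
Definition direct_block (p : 'I_n * 'I_n) : block n := ([:: p.1], [:: p.2]).

Definition circuit_blocks :=
  [seq b <- map mid_block (enum 'I_(mid C)) | b.2 != [::]] ++
  map direct_block (enum [pred p | direct p.2 p.1]).

Lemma rect_sum_circuit_blocks k i : rect_sum circuit_blocks k i = A k i.
Proof.
rewrite rect_sum_cat rect_sum_filter_nonempty A_decomposition /rect_sum !big_map.
congr (_ (+) _).
  by apply: eq_bigr => j _; rewrite /in_block !mem_enum.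
rewrite big_enum_cond big_mkcond.
rewrite -[RHS]/([pred p : 'I_n * 'I_n | direct p.2 p.1] (i, k)) -big_xor_eq1.
apply: eq_bigr => -[i' k'] _; rewrite /in_block !inE andbT xpair_eqE /=.
by case: direct; rewrite //= andbC (eq_sym i) (eq_sym k).
Qed.

Lemma size_encode_circuit_blocks : size (encode circuit_blocks) <= 3 * wires C.
Proof.
have mid_cost : size (encode [seq b <- map mid_block (enum 'I_(mid C)) | b.2 != [::]])
    <= #|[set p : 'I_n * 'I_(mid C) | w_im p.1 p.2]|
       + 2 * #|[set p : 'I_(mid C) * 'I_n | w_mo p.1 p.2]|.
  apply: leq_trans (size_encode_nonempty _) _; first exact: filter_all.
  rewrite big_filter big_mkcond big_map /= card_pairs_swap card_pairs big_distrr -big_split.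
  rewrite big_enum /=; apply: leq_sum => j _; case: ifP => // _.
  rewrite -!cardE leq_add ?leq_mul2l //=.
    by apply/subset_leq_card/subsetP => i; rewrite !inE; apply: mid_coef_wired.
  by apply/subset_leq_card/subsetP => k; rewrite !inE => /andP[].
have direct_cost : size (encode (map direct_block (enum [pred p | direct p.2 p.1])))
    <= 3 * #|[set p | w_io C p.1 p.2]|.
  rewrite size_encode big_map big_enum /= sum_nat_const mulnC leq_mul2l /=.
  by apply/subset_leq_card/subsetP => -[i k]; rewrite !inE => /andP[].
rewrite /circuit_blocks size_encode_cat /wires.
apply: leq_trans (leq_add mid_cost direct_cost) _.
by rewrite mulnDr leq_add2r mulnDr leq_add ?leq_pmull // leq_mul2r orbT.
Qed.
End LinearMiddleCircuit.

Lemma wires_lower_bound n : 2 <= n -> exists A : 'I_n -> 'I_n -> bool,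
  forall C : circuit n, linear_middle C -> computes C A ->
    n * n <= 3 * wires C * (trunc_log 2 n).+2.
Proof.
move=> n_ge2; set p := (trunc_log 2 n).+2; set L := (n * n).-1 %/ p.
have nn_gt0 : 0 < n * n by rewrite muln_gt0 (leq_trans _ n_ge2).
have tokens_le : (2 * n).+1 <= 2 ^ p.
  by have := trunc_log_ltn n (isT : 1 < 2); rewrite /p (expnS 2 _.+1); lia.
have few_codes : (2 * n).+1 ^ L < 2 ^ (n * n).
  apply: (@leq_ltn_trans (2 ^ (p * L))).
    rewrite expnM; have [->|L_gt0] := posnP L; first by rewrite !expn0.
    by rewrite leq_exp2r.
  rewrite ltn_exp2l // mulnC; apply: leq_ltn_trans (leq_divM _ _) _.
  by rewrite ltn_predL.
have [A no_short_code] := exists_matrix_without_short_code few_codes.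
exists A => C C_linear C_computes.
have L_lt := leq_trans (no_short_code _ (rect_sum_circuit_blocks C_linear C_computes))
                       (size_encode_circuit_blocks C_linear A).
have := ltn_ceil (n * n).-1 (isT : 0 < p); rewrite -/L prednK // => nn_le.
by apply: leq_trans nn_le _; rewrite leq_mul2r L_lt orbT.
Qed.

From Stdlib Require Import Reals Lra.

Lemma INR_expn (m e : nat) : INR (expn m e) = (INR m ^ e)%R.
Proof. by elim: e => [//|e IH]; rewrite expnS mult_INR IH. Qed.

Lemma ln_le (x y : R) : (0 < x)%R -> (x <= y)%R -> (ln x <= ln y)%R.
Proof.
move=> x_gt0 /Rle_lt_or_eq_dec [x_lt_y|<-]; last exact: Rle_refl.
exact/Rlt_le/ln_increasing.
Qed.

Lemma trunc_log2_ln n : (2 <= n)%N ->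
  (INR (trunc_log 2 n).+2 * ln 2 <= 3 * ln (INR n))%R.
Proof.
move=> n_ge2; have n_ge2R : (2 <= INR n)%R by apply: (le_INR 2); apply/leP.
have ln2_le : (ln 2 <= ln (INR n))%R by apply: ln_le; lra.
have log_le : (INR (trunc_log 2 n) * ln 2 <= ln (INR n))%R.
  rewrite -ln_pow; last lra.
  apply: ln_le; first by apply: pow_lt; lra.
  rewrite (_ : 2%R = INR 2) -?INR_expn; last by rewrite /=; lra.
  by apply/le_INR/leP/trunc_logP; rewrite // ltnW.
by rewrite !S_INR; lra.
Qed.

Theorem theorem3 :
  exists c : R, (0 < c)%R /\
    forall n : nat, (2 <= n)%N ->
      exists A : 'I_n -> 'I_n -> bool,
        forall C : circuit n, linear_middle C -> computes C A ->
          (c * INR (n * n) / ln (INR n) <= INR (wires C))%R.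
Proof.
have ln2_gt0 := ln_lt_2.
exists (ln 2 / 9)%R; split; first lra.
move=> n n_ge2; have [A A_hard] := wires_lower_bound n_ge2.
exists A => C C_linear C_computes.
have nat_bound : (INR (n * n) <= 3 * INR (wires C) * INR (trunc_log 2 n).+2)%R.
  have /leP/le_INR := A_hard C C_linear C_computes.
  by rewrite !mult_INR [INR 3]/=; lra.
have ln_bound := trunc_log2_ln n_ge2.
have W_ge0 := pos_INR (wires C).
have t_ge2 : (2 <= INR (trunc_log 2 n).+2)%R.
  by rewrite !S_INR; have := pos_INR (trunc_log 2 n); lra.
have lnn_gt0 : (0 < ln (INR n))%R by nra.
have key : (ln 2 * INR (n * n) <= 9 * INR (wires C) * ln (INR n))%R.
  have ln2_ge0 : (0 <= ln 2)%R by lra.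
  have := Rmult_le_compat_l _ _ _ ln2_ge0 nat_bound.
  have := Rmult_le_compat_l (3 * INR (wires C)) _ _ ltac:(lra) ln_bound.
  nra.
apply: (Rmult_le_reg_r (ln (INR n))) => //.
rewrite (_ : ln 2 / 9 * INR (n * n) / ln (INR n) * ln (INR n) = ln 2 * INR (n * n) / 9)%R.
  lra.
by field; lra.
Qed.
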